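(* Let $W$ be a balanced word. The following are equivalent: (i) $W$ is reduced; (ii) $W$ does not contain a subword of the form $RL^nR$ with $n\ge 2$; (iii) $W=L^a(RL)^{k_1}R(RL)^{k_2}R\cdots(RL)^{k_m}RL^b$ for some integers $a,b,m\ge 0$ with $a+b=m$ and $k_i\ge 0$ for $1\le i\le m$.
   Context: Words are finite products of the letters $L,R$; a subword of $a_1\cdots a_n$ is a contiguous block $a_k\cdots a_l$. A word is balanced if it contains equally many $L$'s and $R$'s. A word is prime if it is nonempty, balanced, and cannot be written as a product of two nonempty balanced words. For a balanced word $W=a_1\cdots a_n$, $e_k(W)=\sum_{i=1}^k\overline{a_i}$ ($0\le k\le n$) with $\overline{R}=1$, $\overline{L}=-1$. A prime $P$ of length $n$ is an upper prime if $e_k(P)>0$ for $1\le k\le n-1$, and a lower prime if $e_k(P)<0$ for $1\le k\le n-1$. A word is reduced if it does not contain a subword of the form $UD$ with $U$ an upper prime and $D$ a lower prime. *)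

From mathcomp Require Import all_boot all_order all_algebra.
Set Implicit Arguments. Unset Strict Implicit. Unset Printing Implicit Defensive.
Import Order.TTheory GRing.Theory Num.Theory.

Inductive letter := L | R.
Definition word := seq letter.

Definition isL (a : letter) : bool := if a is L then true else false.
Definition isR (a : letter) : bool := if a is R then true else false.

Definition subword (S W : word) : Prop := exists X Y : word, W = X ++ S ++ Y.

Definition balanced (W : word) : Prop := count isL W = count isR W.

Definition prime_word (P : word) : Prop :=
  P <> [::] /\ balanced P /\
  ~ (exists U V : word, U <> [::] /\ V <> [::] /\ balanced U /\ balanced V /\ P = U ++ V).

Definition bar (a : letter) : int := if a is R then 1%R else (-1)%R.
Definition e (k : nat) (W : word) : int := (\sum_(a <- take k W) bar a)%R.

Definition upper_prime (P : word) : Prop :=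
  prime_word P /\ forall k, (1 <= k <= (size P).-1)%N -> (0 < e k P)%R.
Definition lower_prime (P : word) : Prop :=
  prime_word P /\ forall k, (1 <= k <= (size P).-1)%N -> (e k P < 0)%R.

Definition reduced (W : word) : Prop :=
  ~ (exists U D : word, upper_prime U /\ lower_prime D /\ subword (U ++ D) W).

Definition no_RLnR (W : word) : Prop :=
  ~ (exists n : nat, (2 <= n)%N /\ subword ([:: R] ++ nseq n L ++ [:: R]) W).

(* L^a (RL)^{k_1} R (RL)^{k_2} R ... (RL)^{k_m} R L^b, with ks = [k_1;...;k_m]. *)
Definition normal_form (a b : nat) (ks : seq nat) : word :=
  nseq a L ++ flatten [seq flatten (nseq k [:: R; L]) ++ [:: R] | k <- ks] ++ nseq b L.

Definition form_iii (W : word) : Prop :=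
  exists (a b : nat) (ks : seq nat), a + b = size ks /\ W = normal_form a b ks.

(* A word avoids R L^n R (n >= 2) exactly when consecutive R's are separated
   by at most one L, i.e. when it has the shape L^a (RL)^k1 R ... (RL)^km R L^b;
   counting letters, such a word is balanced iff a + b = m.
   An upper prime starts with R and ends with L, and a lower prime starts with L
   and ends with R, so a product U D contains R ... L L ... R, hence some R L^n R
   with n >= 2. Conversely, if W = X R L^n R Y is balanced, the heights (sums of
   the signs of the letters) of X and Y add up to n - 2 = t + s, where some
   suffix of X has height at least t and some prefix of Y height at least s.
   Cutting at the shortest such suffix X' and prefix Y' makes X' R L^(t+1) an
   upper prime and L^(s+1) R Y' a lower prime, and their product is a subword
   of W. *)

From mathcomp Require Import all_boot all_order all_algebra zify.
Set Implicit Arguments.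
Unset Strict Implicit.
Unset Printing Implicit Defensive.
Import Order.TTheory GRing.Theory Num.Theory.

Lemma subword_trans S T W : subword S T -> subword T W -> subword S W.
Proof.
by move=> [X [Y ->]] [X' [Y' ->]]; exists (X' ++ X), (Y ++ Y'); rewrite !catA.
Qed.

Lemma subword_cons S a w :
  subword S (a :: w) <-> (exists Y, a :: w = S ++ Y) \/ subword S w.
Proof.
split.
- case=> [[|x X] [Y E]]; first by left; exists Y.
  by right; case: E => _ ->; exists X, Y.
- case=> [[Y ->]|[X [Y ->]]]; first by exists [::], Y.
  by exists (a :: X), Y.
Qed.

Definition LLR_prefix (w : word) : Prop :=
  exists n Y, 2 <= n /\ w = nseq n L ++ R :: Y.

Lemma no_RLnR_consL w : no_RLnR (L :: w) <-> no_RLnR w.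
Proof.
split=> H [n [Hn Hs]]; apply: H; exists n; split=> //.
- by apply/subword_cons; right.
- by case/subword_cons: Hs => // [[Y]].
Qed.

Lemma no_RLnR_consR w : no_RLnR (R :: w) <-> no_RLnR w /\ ~ LLR_prefix w.
Proof.
split.
- move=> H; split=> [[n [Hn Hs]] | [n [Y [Hn Ew]]]]; apply: H; exists n; split=> //.
    by apply/subword_cons; right.
  by exists [::], Y; rewrite Ew /= -catA.
- move=> [Hw Hp] [n [Hn /subword_cons [[Y [Ew]]|Hs]]].
    by apply: Hp; exists n, Y; rewrite Ew -catA.
  by apply: Hw; exists n.
Qed.

Lemma no_RLnR_nseqL b : no_RLnR (nseq b L).
Proof.
by move=> [n [_ [X [Y /(congr1 (count isR))]]]]; rewrite !count_cat !count_nseq /=; lia.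
Qed.

Lemma nseqL_not_LLR_prefix b : ~ LLR_prefix (nseq b L).
Proof.
by move=> [n [Y [_ /(congr1 (count isR))]]]; rewrite !count_cat !count_nseq /=; lia.
Qed.

Definition block (k : nat) : word := flatten (nseq k [:: R; L]) ++ [:: R].

Lemma normal_formE a b ks :
  normal_form a b ks = nseq a L ++ flatten (map block ks) ++ nseq b L.
Proof. by []. Qed.

Lemma no_RLnR_normal_form W : no_RLnR W -> exists a b ks, W = normal_form a b ks.
Proof.
elim: W => [|[] W IH] HW; first by exists 0, 0, [::].
- have [a [b [ks ->]]] := IH ((no_RLnR_consL W).1 HW).
  by exists a.+1, b, ks.
- have [/IH [a [b [ks ->]]] HLLR] := (no_RLnR_consR W).1 HW.
  case: ks HLLR => [|k ks] HLLR.
    by exists 0, (a + b), [:: 0]; rewrite /normal_form /= nseqD.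
  case: a HLLR => [|[|a]] HLLR.
  + by exists 0, b, [:: 0, k & ks].
  + by exists 0, b, (k.+1 :: ks).
  + by case: HLLR; exists a.+2; case: k; eexists.
Qed.

Lemma normal_form_no_RLnR a b ks : no_RLnR (normal_form a b ks).
Proof.
rewrite normal_formE; elim: a => [|a IH] /=; last exact/no_RLnR_consL.
elim: ks => [|k ks IH] /=; first exact: no_RLnR_nseqL.
set V := flatten _ ++ _ in IH *.
have HV : ~ LLR_prefix V.
  case: ks {IH} @V => [|k' ks] /=; first exact: nseqL_not_LLR_prefix.
  by move=> [[|n] [Y [// E]]]; case: k' E.
rewrite -catA; elim: k => [|k IHk] /=; first exact/no_RLnR_consR.
apply/no_RLnR_consR; split; first exact/no_RLnR_consL.
by move=> [[|[|n]] [Y [// E]]]; case: k E {IHk}.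
Qed.

Definition height (w : word) : int := (\sum_(a <- w) bar a)%R.

Lemma eE k W : e k W = height (take k W).
Proof. by []. Qed.

Lemma height_nil : height [::] = 0%R.
Proof. exact: big_nil. Qed.

Lemma height_cons a w : height (a :: w) = (bar a + height w)%R.
Proof. exact: big_cons. Qed.

Lemma height_cat u v : height (u ++ v) = (height u + height v)%R.
Proof. exact: big_cat. Qed.

Lemma height_rev w : height (rev w) = height w.
Proof. exact: big_rev. Qed.

Lemma height_nseqL n : height (nseq n L) = (- n%:Z)%R.
Proof. by elim: n => [|n IH]; rewrite ?height_nil //= height_cons IH /=; lia. Qed.

Lemma balancedE w : balanced w <-> height w = 0%R.
Proof.
suff -> : height w = ((count isR w)%:Z - (count isL w)%:Z)%R by rewrite /balanced; lia.
by elim: w => [|a w IH]; rewrite ?height_nil // height_cons IH; case: a => /=; lia.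
Qed.

Lemma height_block k : height (block k) = 1%R.
Proof.
elim: k => [|k IH]; first by rewrite height_cons height_nil.
by have -> : block k.+1 = R :: L :: block k by []; rewrite !height_cons IH /=; lia.
Qed.

Lemma balanced_normal_form a b ks : balanced (normal_form a b ks) <-> a + b = size ks.
Proof.
have height_blocks : (height (flatten (map block ks)) = (size ks)%:Z)%R.
  elim: ks => [|k ks IH]; first exact: height_nil.
  by rewrite /= height_cat height_block IH; lia.
by rewrite balancedE normal_formE !height_cat height_blocks !height_nseqL; lia.
Qed.

Lemma height_takeS_le w i : (height (take i.+1 w) <= height (take i w) + 1)%R.
Proof.
case: (ltnP i (size w)) => Hi.
  rewrite (take_nth L Hi) -cats1 height_cat height_cons height_nil.
  by case: nth => /=; lia.
by rewrite !take_oversize ?(leqW Hi) //; lia.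
Qed.

Definition reaches (t : nat) (Y : word) : Prop :=
  exists i, (t%:Z <= height (take i Y))%R.

Lemma first_prefix_reaching t Y : reaches t Y ->
  exists Y1 Y2, Y = Y1 ++ Y2 /\ (height Y1 = t%:Z)%R /\
    forall j, j < size Y1 -> (height (take j Y1) < t%:Z)%R.
Proof.
move=> reach; case: (ex_minnP reach) => m Hm Hmin.
have below j : j < m -> (height (take j Y) < t%:Z)%R.
  by move=> Hj; rewrite ltNge; apply/negP => /Hmin; rewrite leqNgt Hj.
exists (take m Y), (drop m Y); split; first by rewrite cat_take_drop.
split.
  case: m Hm {Hmin} below => [|m] Hm below; first by move: Hm; rewrite take0 height_nil; lia.
  by have := below m (ltnSn m); have := height_takeS_le Y m; lia.
move=> j; rewrite size_take => Hj; have Hjm : j < m by case: ifP Hj; lia.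
by rewrite take_takel ?(ltnW Hjm) //; apply: below.
Qed.

Lemma reaches_split (n : nat) X Y : (height X + height Y = n%:Z)%R ->
  exists t s : nat, t + s = n /\ reaches t X /\ reaches s Y.
Proof.
have reach0 V : reaches 0 V by exists 0; rewrite take0 height_nil.
have reach_all (t : nat) V : (t%:Z <= height V)%R -> reaches t V.
  by exists (size V); rewrite take_size.
case EX: (height X) => [p|p] Hn.
- have [Hp|Hp] := leqP p n.
    by exists p, (n - p); split; [lia | split; apply: reach_all; lia].
  by exists n, 0; split; [lia | split; [apply: reach_all; lia | ]].
- by exists 0, n; split; [ | split; [ | apply: reach_all; lia]].
Qed.

Lemma prime_word_of_nonzero_prefixes P : P <> [::] -> height P = 0%R ->
  (forall k, 1 <= k <= (size P).-1 -> height (take k P) <> 0%R) -> prime_word P.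
Proof.
move=> P0 HP Hk; split=> //; split; first exact/balancedE.
move=> [U [V [U0 [V0 [HU [_ EP]]]]]]; apply: (Hk (size U)).
  rewrite EP size_cat; case: U U0 {HU EP} => // a U _; case: V V0 => // b V _ /=; lia.
by rewrite EP take_size_cat //; apply/balancedE.
Qed.

Lemma lower_prime_of_negative_prefixes P : P <> [::] -> height P = 0%R ->
  (forall k, 1 <= k <= (size P).-1 -> (e k P < 0)%R) -> lower_prime P.
Proof.
move=> P0 HP Hk; split=> //; apply: prime_word_of_nonzero_prefixes => // k /Hk.
by rewrite eE => /ltr0_neq0 /eqP.
Qed.

Lemma lower_prime_nseqL_R (m : nat) Y : (height Y = m%:Z)%R ->
  (forall j, j < size Y -> (height (take j Y) < m%:Z)%R) ->
  lower_prime (nseq m.+1 L ++ R :: Y).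
Proof.
move=> HY Hpre; apply: lower_prime_of_negative_prefixes => //.
  by rewrite height_cat height_cons HY height_nseqL /=; lia.
move=> k Hk; rewrite eE take_cat size_nseq.
rewrite size_cat size_nseq /= in Hk.
case: ltnP => Hkm; first by rewrite take_nseq ?height_nseqL; lia.
case Ej: (k - m.+1) => [|j]; first by rewrite cats0 height_nseqL; lia.
rewrite height_cat height_nseqL /= height_cons /=; have := Hpre j; lia.
Qed.

Lemma prime_word_rev P : prime_word P -> prime_word (rev P).
Proof.
have rev_nonnil V : V <> [::] -> rev V <> [::] by move=> + /(congr1 rev); rewrite revK.
move=> [P0 [HP Hind]]; split; first exact: rev_nonnil.
split; first by rewrite /balanced !count_rev.
move=> [U [V [U0 [V0 [HU [HV E]]]]]]; apply: Hind.
exists (rev V), (rev U); do !split; try exact: rev_nonnil.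
- by rewrite /balanced !count_rev.
- by rewrite /balanced !count_rev.
- by rewrite -rev_cat -E revK.
Qed.

Lemma lower_prime_rev D : lower_prime D -> upper_prime (rev D).
Proof.
move=> [HD Hneg]; split; first exact: prime_word_rev.
have HD0 : height D = 0%R by apply/balancedE; case: HD => _ [].
move=> k; rewrite size_rev => Hk.
have Hlt : (height (take (size D - k) D) < 0)%R by rewrite -eE; apply: Hneg; lia.
have := congr1 height (cat_take_drop (size D - k) D).
by rewrite eE take_rev height_rev height_cat HD0; lia.
Qed.

Lemma upper_prime_shape U : upper_prime U -> exists Q, U = R :: rcons Q L.
Proof.
move=> [[U0 [/balancedE HU _]] Hpos].
case: U U0 HU Hpos => [//|a U] _ HU Hpos.
case/lastP: U HU Hpos => [|Q b] HU Hpos.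
  by case: a HU {Hpos}; rewrite height_cons height_nil.
have Ha : (0 < bar a)%R.
  have := Hpos 1; rewrite eE /= take0 height_cons height_nil addr0.
  by apply; rewrite size_rcons.
have Hb : (bar b < 0)%R.
  have := Hpos (size Q).+1; rewrite eE /= -cats1 take_size_cat // size_cat /= addn1.
  by move: HU; rewrite -cats1 -cat_cons height_cat !height_cons height_nil; lia.
by exists Q; case: a Ha {HU Hpos}; case: b Hb.
Qed.

Lemma lower_prime_shape D : lower_prime D -> exists Q, D = L :: rcons Q R.
Proof.
move/lower_prime_rev/upper_prime_shape => [Q EQ]; exists (rev Q).
by rewrite -[D]revK EQ rev_cons rev_rcons.
Qed.

Lemma first_R_split w : exists j Q, rcons w R = nseq j L ++ R :: Q.
Proof.
elim: w => [|[] w [j [Q E]]] /=; first by exists 0, [::].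
  by exists j.+1, Q; rewrite E.
by exists 0, (rcons w R).
Qed.

Lemma last_R_split w : exists P i, R :: w = P ++ R :: nseq i L.
Proof.
have [i [P E]] := first_R_split (rev w); exists (rev P), i.
by rewrite -[w]revK -rev_rcons E rev_cat rev_cons rev_nseq cat_rcons.
Qed.

Lemma no_RLnR_subword S W : subword S W -> no_RLnR W -> no_RLnR S.
Proof.
by move=> HS HW [n [Hn Hsub]]; apply: HW; exists n; split=> //; apply: subword_trans HS.
Qed.

Lemma RLLR_not_no_RLnR P Q : ~ no_RLnR (R :: P ++ L :: L :: rcons Q R).
Proof.
have [P' [i EP]] := last_R_split P; have [j [Q' EQ]] := first_R_split Q.
apply; exists (i + 2 + j); split; first lia.
by exists P', Q'; rewrite -cat_cons EP EQ !nseqD -!catA.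
Qed.

Lemma no_RLnR_reduced W : no_RLnR W -> reduced W.
Proof.
move=> HW [U [D [/upper_prime_shape [P ->] [/lower_prime_shape [Q ->] HUD]]]].
by have := no_RLnR_subword HUD HW; rewrite /= cat_rcons; apply: RLLR_not_no_RLnR.
Qed.

Lemma reduced_no_RLnR W : balanced W -> reduced W -> no_RLnR W.
Proof.
move=> /balancedE HW Hred [n [Hn [X [Y EW]]]]; apply: Hred.
have Hheights : (height (rev X) + height Y = (n - 2)%:Z)%R.
  move: HW; rewrite EW height_rev.
  by rewrite !(height_cat, height_cons, height_nseqL, height_nil) /=; lia.
have [t [s [Hts [HtX HsY]]]] := reaches_split Hheights.
have [Z1 [Z2 [EX [HZ1 HZ1pre]]]] := first_prefix_reaching HtX.
have [Y1 [Y2 [EY [HY1 HY1pre]]]] := first_prefix_reaching HsY.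
exists (rev (nseq t.+1 L ++ R :: Z1)), (nseq s.+1 L ++ R :: Y1).
split; first exact/lower_prime_rev/lower_prime_nseqL_R.
split; first exact: lower_prime_nseqL_R.
exists (rev Z2), Y2; rewrite EW -[X]revK EX EY.
have -> : n = t.+1 + s.+1 by lia.
by rewrite nseqD !rev_cat rev_cons rev_nseq -!catA cat_rcons.
Qed.

Theorem proposition6p4 (W : word) :
  balanced W ->
  (reduced W <-> no_RLnR W) /\ (no_RLnR W <-> form_iii W).
Proof.
move=> HW; split; split.
- exact: reduced_no_RLnR.
- exact: no_RLnR_reduced.
- move=> /no_RLnR_normal_form [a [b [ks EW]]]; exists a, b, ks; split=> //.
  by apply/balanced_normal_form; rewrite -EW.
- by move=> [a [b [ks [_ ->]]]]; apply: normal_form_no_RLnR.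
Qed.
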